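(* Let $\alpha\in\mathbb{R}\setminus\mathbb{Q}$ and $\tilde v\in C^0(\mathbb{T},\mathbb{C})$, and let $S^{\tilde v}(x)=\begin{pmatrix}\tilde v(x)&-1\\1&0\end{pmatrix}$. Assume that $|\operatorname{Re}\tilde v(x)|\le l$ and $\epsilon\le\operatorname{Im}\tilde v(x)\le l$ for all $x\in\mathbb{T}$, where $l\ge \epsilon>0$. Then $L(\alpha,S^{\tilde v})\ge C(l)\,\epsilon$, where $C(l)>0$ is a constant depending only on $l$.
   Context: $\mathbb{T}=\mathbb{R}/\mathbb{Z}$. For a continuous $A:\mathbb{T}\to SL(2,\mathbb{C})$ the Lyapunov exponent of the quasiperiodic cocycle $(\alpha,A)$ is $L(\alpha,A)=\lim_{n\to\infty}\frac1n\int_{\mathbb T}\ln\|A(x+(n-1)\alpha)\cdots A(x)\|\,dx$. *)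

From Stdlib Require Import Reals.
From Coquelicot Require Import Coquelicot.
Open Scope R_scope.

Record M2 := mkM2 { m11 : C; m12 : C; m21 : C; m22 : C }.

Definition M2mul (A B : M2) : M2 :=
  mkM2 (Cplus (Cmult (m11 A) (m11 B)) (Cmult (m12 A) (m21 B)))
       (Cplus (Cmult (m11 A) (m12 B)) (Cmult (m12 A) (m22 B)))
       (Cplus (Cmult (m21 A) (m11 B)) (Cmult (m22 A) (m21 B)))
       (Cplus (Cmult (m21 A) (m12 B)) (Cmult (m22 A) (m22 B))).

Definition M2id : M2 := mkM2 (RtoC 1) (RtoC 0) (RtoC 0) (RtoC 1).

Definition M2app (A : M2) (v : C * C) : C * C :=
  (Cplus (Cmult (m11 A) (fst v)) (Cmult (m12 A) (snd v)),
   Cplus (Cmult (m21 A) (fst v)) (Cmult (m22 A) (snd v))).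

Definition vnorm (v : C * C) : R :=
  sqrt (Cmod (fst v) ^ 2 + Cmod (snd v) ^ 2).

Definition opnorm (A : M2) : R :=
  real (Lub_Rbar (fun r => exists v, vnorm v = 1 /\ r = vnorm (M2app A v))).

Fixpoint cocycle (alpha : R) (A : R -> M2) (n : nat) (x : R) : M2 :=
  match n with
  | O => M2id
  | S k => M2mul (A (x + INR k * alpha)) (cocycle alpha A k x)
  end.

(* Lyapunov exponent: lim_{n->oo} (1/n) ∫_T ln ||A_n(x)|| dx, with T = [0,1]
   (functions on T = R/Z are represented as 1-periodic functions on R). *)
Definition lyapunov (alpha : R) (A : R -> M2) : Rbar :=
  Lim_seq (fun n => / INR (S n) *
    RInt (fun x => ln (opnorm (cocycle alpha A (S n) x))) 0 1).

Definition Smat (v : R -> C) (x : R) : M2 :=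
  mkM2 (v x) (RtoC (-1)) (RtoC 1) (RtoC 0).

Definition irrational (a : R) : Prop :=
  ~ exists p q : Z, q <> 0%Z /\ a = IZR p / IZR q.

From Stdlib Require Import Reals Lra Lia.
From Coquelicot Require Import Coquelicot.
Open Scope R_scope.

(* Let J(w) = Im (w1 * conj w2).  One step of S^v sends (w1, w2) to (v w1 - w2, w1) and
   raises J by Im v * |w1|^2 >= eps |w1|^2; over two steps, |J| <= |w1| |w2| and AM-GM
   give J_(k+2) >= (1 + 2 eps) J_k.  Starting from a unit vector with J = 1/2 and using
   2 J(w) <= |w|^2, the norm of the n-step cocycle is at least (1 + 2 eps)^(n/4) at every
   point, so L >= ln (1 + 2 eps) / 4 >= eps / (2 (1 + 2 l)). *)

Definition M2sub (A B : M2) : M2 :=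
  mkM2 (Cminus (m11 A) (m11 B)) (Cminus (m12 A) (m12 B))
       (Cminus (m21 A) (m21 B)) (Cminus (m22 A) (m22 B)).

Definition M2norm1 (A : M2) : R :=
  Cmod (m11 A) + Cmod (m12 A) + Cmod (m21 A) + Cmod (m22 A).

Lemma M2app_mul A B w : M2app (M2mul A B) w = M2app A (M2app B w).
Proof.
  destruct A, B, w; unfold M2app, M2mul; simpl; f_equal; ring.
Qed.

Lemma M2app_id w : M2app M2id w = w.
Proof. destruct w; unfold M2app, M2id; simpl; f_equal; ring. Qed.

Lemma M2app_sub_split A B w :
  M2app A w = plus (M2app B w) (M2app (M2sub A B) w).
Proof.
  destruct A, B, w; unfold M2app, M2sub; simpl.
  unfold plus; simpl; unfold prod_plus, plus; simpl. f_equal; ring.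
Qed.

Lemma M2norm1_sub_sym A B : M2norm1 (M2sub A B) = M2norm1 (M2sub B A).
Proof.
  assert (Hsym : forall a b : C, Cmod (Cminus a b) = Cmod (Cminus b a)).
  { intros a b. rewrite <- Cmod_opp. f_equal. ring. }
  unfold M2norm1, M2sub; simpl.
  rewrite (Hsym (m11 A)), (Hsym (m12 A)), (Hsym (m21 A)), (Hsym (m22 A)). reflexivity.
Qed.

Lemma Cmod_fst_le_vnorm u : Cmod (fst u) <= vnorm u.
Proof.
  destruct u as [a b]. apply Rle_trans with (Rmax (Cmod a) (Cmod b)).
  - apply Rmax_l.
  - exact (proj1 (@norm_prod C_AbsRing C_NormedModule C_NormedModule a b)).
Qed.

Lemma Cmod_snd_le_vnorm u : Cmod (snd u) <= vnorm u.
Proof.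
  destruct u as [a b]. apply Rle_trans with (Rmax (Cmod a) (Cmod b)).
  - apply Rmax_r.
  - exact (proj1 (@norm_prod C_AbsRing C_NormedModule C_NormedModule a b)).
Qed.

Lemma vnorm_le_Cmod_sum u : vnorm u <= Cmod (fst u) + Cmod (snd u).
Proof.
  pose proof (Cmod_ge_0 (fst u)); pose proof (Cmod_ge_0 (snd u)).
  unfold vnorm. rewrite <- (sqrt_pow2 (Cmod (fst u) + Cmod (snd u))) by lra.
  apply sqrt_le_1_alt. nra.
Qed.

Lemma vnorm_M2app_le A u : vnorm (M2app A u) <= M2norm1 A * vnorm u.
Proof.
  pose proof (Cmod_fst_le_vnorm u); pose proof (Cmod_snd_le_vnorm u).
  assert (Hrow : forall c d : C,
    Cmod (Cplus (Cmult c (fst u)) (Cmult d (snd u))) <= (Cmod c + Cmod d) * vnorm u).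
  { intros c d. eapply Rle_trans; [apply Cmod_triangle|]. rewrite !Cmod_mult.
    pose proof (Cmod_ge_0 c); pose proof (Cmod_ge_0 d). nra. }
  eapply Rle_trans; [apply vnorm_le_Cmod_sum|]. unfold M2norm1, M2app; simpl.
  pose proof (Hrow (m11 A) (m12 A)); pose proof (Hrow (m21 A) (m22 A)). lra.
Qed.

Lemma vnorm_triangle u w : vnorm (plus u w) <= vnorm u + vnorm w.
Proof. exact (@prod_norm_triangle C_AbsRing C_NormedModule C_NormedModule u w). Qed.

Lemma is_lub_Rbar_real (E : R -> Prop) x0 c :
  E x0 -> (forall x, E x -> x <= c) -> is_lub_Rbar E (real (Lub_Rbar E)).
Proof.
  intros Hx0 Hc. pose proof (Lub_Rbar_correct E) as Hlub.
  destruct (Lub_Rbar E) as [r| |]; [exact Hlub| |]; exfalso.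
  - apply (proj2 Hlub c). intros x Hx. exact (Hc x Hx).
  - exact (proj1 Hlub x0 Hx0).
Qed.

Lemma is_lub_opnorm A :
  is_lub_Rbar (fun r => exists v, vnorm v = 1 /\ r = vnorm (M2app A v)) (opnorm A).
Proof.
  apply (is_lub_Rbar_real _ (vnorm (M2app A (RtoC 1, RtoC 0))) (M2norm1 A)).
  - exists (RtoC 1, RtoC 0). split; [|reflexivity].
    unfold vnorm; cbn [fst snd]. rewrite Cmod_1, Cmod_0, pow1, pow_i, Rplus_0_r by lia.
    apply sqrt_1.
  - intros x [v [Hv ->]]. rewrite <- (Rmult_1_r (M2norm1 A)), <- Hv.
    apply vnorm_M2app_le.
Qed.

Lemma opnorm_ge A u : vnorm u = 1 -> vnorm (M2app A u) <= opnorm A.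
Proof. intro Hu. apply (proj1 (is_lub_opnorm A)). exists u; auto. Qed.

Lemma opnorm_le A c :
  (forall u, vnorm u = 1 -> vnorm (M2app A u) <= c) -> opnorm A <= c.
Proof.
  intro Hc. apply (proj2 (is_lub_opnorm A) c). intros x [u [Hu ->]]. exact (Hc u Hu).
Qed.

Lemma opnorm_lipschitz A B : opnorm A <= opnorm B + M2norm1 (M2sub A B).
Proof.
  apply opnorm_le. intros u Hu. rewrite (M2app_sub_split A B u).
  eapply Rle_trans; [apply vnorm_triangle|]. apply Rplus_le_compat.
  - exact (opnorm_ge B u Hu).
  - rewrite <- (Rmult_1_r (M2norm1 _)), <- Hu. apply vnorm_M2app_le.
Qed.

Lemma Rabs_opnorm_sub_le A B : Rabs (opnorm A - opnorm B) <= M2norm1 (M2sub A B).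
Proof.
  pose proof (opnorm_lipschitz A B) as HAB; pose proof (opnorm_lipschitz B A) as HBA.
  rewrite M2norm1_sub_sym in HBA. apply Rabs_le. lra.
Qed.

Definition M2_continuous (M : R -> M2) (x : R) : Prop :=
  continuous (fun y => m11 (M y)) x /\ continuous (fun y => m12 (M y)) x /\
  continuous (fun y => m21 (M y)) x /\ continuous (fun y => m22 (M y)) x.

Lemma continuous_Cplus (f g : R -> C) x :
  continuous f x -> continuous g x -> continuous (fun y => Cplus (f y) (g y)) x.
Proof. exact (@continuous_plus _ C_AbsRing C_NormedModule f g x). Qed.

Lemma continuous_Rplus (f g : R -> R) x :
  continuous f x -> continuous g x -> continuous (fun y => f y + g y) x.
Proof. exact (@continuous_plus _ R_AbsRing R_NormedModule f g x). Qed.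

(* Coquelicot equips C with two uniform structures, the product one (used by [continuous v])
   and the one of the absolute value ring (used by [continuous_mult]); both have the same
   neighbourhoods. *)
Lemma locally_C_le_AbsRing (z : C) :
  filter_le (@locally C_UniformSpace z) (@locally (AbsRing_UniformSpace C_AbsRing) z).
Proof.
  intros P HP.
  exact (@locally_le_locally_norm C_AbsRing C_NormedModule z P
          (@locally_norm_le_locally C_AbsRing (AbsRing_NormedModule C_AbsRing) z P HP)).
Qed.

Lemma locally_AbsRing_le_C (z : C) :
  filter_le (@locally (AbsRing_UniformSpace C_AbsRing) z) (@locally C_UniformSpace z).
Proof.
  intros P HP.
  exact (@locally_le_locally_norm C_AbsRing (AbsRing_NormedModule C_AbsRing) z P
          (@locally_norm_le_locally C_AbsRing C_NormedModule z P HP)).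
Qed.

Lemma continuous_Cmult (f g : R -> C) x :
  continuous f x -> continuous g x -> continuous (fun y => Cmult (f y) (g y)) x.
Proof.
  intros Hf Hg. apply (filterlim_filter_le_2 _ (locally_AbsRing_le_C _)).
  apply (@continuous_mult _ C_AbsRing);
    apply (filterlim_filter_le_2 _ (locally_C_le_AbsRing _)); assumption.
Qed.

Lemma continuous_Cmod_sub (f : R -> C) x :
  continuous f x -> continuous (fun y => Cmod (Cminus (f y) (f x))) x.
Proof.
  intro Hf. apply (continuous_comp _ (@norm C_AbsRing C_NormedModule)).
  - apply (@continuous_minus _ C_AbsRing C_NormedModule); [exact Hf|apply continuous_const].
  - apply filterlim_norm.
Qed.

Lemma M2_continuous_mul A B x :
  M2_continuous A x -> M2_continuous B x -> M2_continuous (fun y => M2mul (A y) (B y)) x.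
Proof.
  intros (a11 & a12 & a21 & a22) (b11 & b12 & b21 & b22).
  repeat split; apply continuous_Cplus; apply continuous_Cmult; assumption.
Qed.

Lemma M2_continuous_cocycle alpha A n x :
  (forall k : nat, M2_continuous (fun y => A (y + INR k * alpha)) x) ->
  M2_continuous (cocycle alpha A n) x.
Proof.
  intro HA. induction n as [|n IH]; simpl.
  - repeat split; apply continuous_const.
  - exact (M2_continuous_mul _ _ x (HA n) IH).
Qed.

Lemma M2_continuous_Smat_shift (v : R -> C) c x :
  (forall y, continuous v y) -> M2_continuous (fun y => Smat v (y + c)) x.
Proof.
  intro Hv. repeat split; try apply continuous_const.
  apply (continuous_comp (fun y => y + c) v); [|apply Hv].
  apply continuous_Rplus; [apply continuous_id|apply continuous_const].
Qed.

Lemma continuous_of_dominated (f h : R -> R) x :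
  continuous h x -> h x = 0 -> (forall y, Rabs (f y - f x) <= h y) -> continuous f x.
Proof.
  intros Hh Hh0 Hdom. apply filterlim_locally. intro eps.
  eapply filter_imp; [|exact (proj1 (filterlim_locally h (h x)) Hh eps)].
  intros y Hy. rewrite Hh0 in Hy. change (Rabs (f y - f x) < eps).
  change (Rabs (h y - 0) < eps) in Hy. rewrite Rminus_0_r in Hy.
  eapply Rle_lt_trans; [apply Hdom|]. eapply Rle_lt_trans; [apply Rle_abs|exact Hy].
Qed.

Lemma continuous_opnorm M x : M2_continuous M x -> continuous (fun y => opnorm (M y)) x.
Proof.
  intros (c11 & c12 & c21 & c22).
  apply (continuous_of_dominated _ (fun y => M2norm1 (M2sub (M y) (M x)))).
  - unfold M2norm1, M2sub; cbn [m11 m12 m21 m22].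
    apply continuous_Rplus; [apply continuous_Rplus; [apply continuous_Rplus|]|].
    + exact (continuous_Cmod_sub (fun y => m11 (M y)) x c11).
    + exact (continuous_Cmod_sub (fun y => m12 (M y)) x c12).
    + exact (continuous_Cmod_sub (fun y => m21 (M y)) x c21).
    + exact (continuous_Cmod_sub (fun y => m22 (M y)) x c22).
  - unfold M2norm1, M2sub; cbn [m11 m12 m21 m22].
    assert (Hzero : forall z : C, Cmod (Cminus z z) = 0).
    { intro z. replace (Cminus z z) with (RtoC 0) by ring. apply Cmod_0. }
    rewrite !Hzero. ring.
  - intro y. apply Rabs_opnorm_sub_le.
Qed.

(* The Wronskian of a solution of the eigenvalue equation with its complex conjugate,
   divided by 2i. *)
Definition im_wronskian (w : C * C) : R := Im (Cmult (fst w) (Cconj (snd w))).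

Lemma Rabs_Im_le_Cmod z : Rabs (Im z) <= Cmod z.
Proof.
  pose proof (Cmod2_alt z); pose proof (Cmod_ge_0 z).
  rewrite <- (Rabs_pos_eq (Cmod z)) by assumption.
  apply Rsqr_le_abs_0. unfold Rsqr. nra.
Qed.

Lemma Rabs_im_wronskian_le w : Rabs (im_wronskian w) <= Cmod (fst w) * Cmod (snd w).
Proof.
  rewrite <- Cmod_conj with (c := snd w), <- Cmod_mult. apply Rabs_Im_le_Cmod.
Qed.

Lemma im_wronskian_le_vnorm w : 2 * im_wronskian w <= vnorm w ^ 2.
Proof.
  pose proof (Rabs_im_wronskian_le w) as Hcs. pose proof (Rle_abs (im_wronskian w)).
  unfold vnorm. rewrite pow2_sqrt by (apply Rplus_le_le_0_compat; apply pow2_ge_0).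
  pose proof (pow2_ge_0 (Cmod (fst w) - Cmod (snd w))). nra.
Qed.

Lemma snd_M2app_Smat v x w : snd (M2app (Smat v x) w) = fst w.
Proof. unfold M2app, Smat; simpl. ring. Qed.

Lemma im_wronskian_Smat v x w :
  im_wronskian (M2app (Smat v x) w) = im_wronskian w + Im (v x) * Cmod (fst w) ^ 2.
Proof.
  rewrite Cmod2_alt. unfold im_wronskian, M2app, Smat; simpl.
  destruct (v x), w as [[] []]; simpl. ring.
Qed.

Lemma im_wronskian_Smat_two_steps v x1 x2 eps w :
  0 <= eps -> eps <= Im (v x1) -> eps <= Im (v x2) -> 0 <= im_wronskian w ->
  (1 + 2 * eps) * im_wronskian w <= im_wronskian (M2app (Smat v x2) (M2app (Smat v x1) w)).
Proof.
  intros Heps Hx1 Hx2 Hw. set (w1 := M2app (Smat v x1) w).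
  rewrite im_wronskian_Smat.
  pose proof (im_wronskian_Smat v x1 w) as Hstep. fold w1 in Hstep.
  pose proof (Rabs_im_wronskian_le w1) as Hcs.
  replace (snd w1) with (fst w) in Hcs by (symmetry; apply snd_M2app_Smat).
  pose proof (Rle_abs (im_wronskian w1)).
  set (p0 := Cmod (fst w)) in *; set (p1 := Cmod (fst w1)) in *.
  assert (Hamgm : 2 * (p1 * p0) <= p0 ^ 2 + p1 ^ 2)
    by (pose proof (pow2_ge_0 (p0 - p1)); nra).
  assert (eps * p0 ^ 2 <= Im (v x1) * p0 ^ 2) by (apply Rmult_le_compat_r; nra).
  assert (eps * p1 ^ 2 <= Im (v x2) * p1 ^ 2) by (apply Rmult_le_compat_r; nra).
  nra.
Qed.

(* Tracking the products a k * a (k+1) avoids a case split on the parity of n. *)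
Lemma two_step_growth (a : nat -> R) r :
  0 <= r -> 0 <= a 0%nat -> (forall k, a k <= a (S k)) ->
  (forall k, r * a k <= a (S (S k))) ->
  forall n, r ^ n * a 0%nat ^ 2 <= a (S n) ^ 2.
Proof.
  intros Hr Ha0 Hmono Hgrow.
  assert (Hge : forall k, a 0%nat <= a k).
  { induction k as [|k IH]; [lra|]. eapply Rle_trans; [exact IH|apply Hmono]. }
  assert (Hprod : forall n, r ^ n * (a 0%nat * a 1%nat) <= a n * a (S n)).
  { induction n as [|n IH]; simpl; [lra|].
    pose proof (Hge n); pose proof (Hge (S n)); pose proof (Hgrow n).
    apply Rle_trans with (r * (a n * a (S n))); [nra|]. nra. }
  intro n. apply Rle_trans with (r ^ n * (a 0%nat * a 1%nat)).
  - apply Rmult_le_compat_l; [apply pow_le; exact Hr|].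
    pose proof (Hge 1%nat). simpl. nra.
  - eapply Rle_trans; [apply Hprod|].
    pose proof (Hge n); pose proof (Hmono n). simpl. nra.
Qed.

Definition w_init : C * C := ((0, / sqrt 2), (/ sqrt 2, 0)).

Lemma inv_sqrt2_sq : / sqrt 2 * / sqrt 2 = / 2.
Proof. rewrite <- Rinv_mult, sqrt_sqrt; lra. Qed.

Lemma vnorm_w_init : vnorm w_init = 1.
Proof.
  unfold vnorm, w_init. rewrite !Cmod2_alt; simpl.
  transitivity (sqrt 1); [f_equal|apply sqrt_1].
  pose proof inv_sqrt2_sq. lra.
Qed.

Lemma im_wronskian_w_init : im_wronskian w_init = / 2.
Proof. unfold im_wronskian, w_init; simpl. rewrite <- inv_sqrt2_sq. ring. Qed.

Section Orbit.

Variables (alpha eps x : R) (v : R -> C).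
Hypothesis eps_gt0 : 0 < eps.
Hypothesis Im_v_ge : forall y, eps <= Im (v y).

Let orbit (k : nat) : C * C := M2app (cocycle alpha (Smat v) k x) w_init.

Lemma orbit_0 : orbit 0 = w_init.
Proof. apply M2app_id. Qed.

Lemma orbit_S k : orbit (S k) = M2app (Smat v (x + INR k * alpha)) (orbit k).
Proof. apply M2app_mul. Qed.

Lemma im_wronskian_orbit_le_S k : im_wronskian (orbit k) <= im_wronskian (orbit (S k)).
Proof.
  rewrite orbit_S, im_wronskian_Smat.
  pose proof (Im_v_ge (x + INR k * alpha)); pose proof (pow2_ge_0 (Cmod (fst (orbit k)))).
  nra.
Qed.

Lemma im_wronskian_orbit_ge k : / 2 <= im_wronskian (orbit k).
Proof.
  induction k as [|k IH].
  - rewrite orbit_0, im_wronskian_w_init. lra.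
  - eapply Rle_trans; [exact IH|apply im_wronskian_orbit_le_S].
Qed.

Lemma vnorm_orbit_pow4_ge n : (1 + 2 * eps) ^ n <= vnorm (orbit (S n)) ^ 4.
Proof.
  assert (Hgrowth : (1 + 2 * eps) ^ n * im_wronskian (orbit 0) ^ 2
                    <= im_wronskian (orbit (S n)) ^ 2).
  { apply (two_step_growth (fun k => im_wronskian (orbit k))).
    - lra.
    - pose proof (im_wronskian_orbit_ge 0); lra.
    - apply im_wronskian_orbit_le_S.
    - intro k. rewrite (orbit_S (S k)), (orbit_S k).
      apply im_wronskian_Smat_two_steps; try apply Im_v_ge; [lra|].
      pose proof (im_wronskian_orbit_ge k); lra. }
  rewrite orbit_0, im_wronskian_w_init in Hgrowth.
  pose proof (im_wronskian_le_vnorm (orbit (S n))).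
  pose proof (im_wronskian_orbit_ge (S n)).
  apply Rle_trans with ((2 * im_wronskian (orbit (S n))) ^ 2).
  - replace ((2 * im_wronskian (orbit (S n))) ^ 2)
      with (4 * im_wronskian (orbit (S n)) ^ 2) by ring.
    replace ((/ 2) ^ 2) with (/ 4) in Hgrowth by field. lra.
  - replace (vnorm (orbit (S n)) ^ 4) with ((vnorm (orbit (S n)) ^ 2) ^ 2) by ring.
    apply pow_incr. lra.
Qed.

Lemma vnorm_orbit_le_opnorm n : vnorm (orbit n) <= opnorm (cocycle alpha (Smat v) n x).
Proof. exact (opnorm_ge _ _ vnorm_w_init). Qed.

Lemma one_le_opnorm_cocycle n : 1 <= opnorm (cocycle alpha (Smat v) n x).
Proof.
  eapply Rle_trans; [|apply vnorm_orbit_le_opnorm].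
  pose proof (im_wronskian_le_vnorm (orbit n)); pose proof (im_wronskian_orbit_ge n).
  assert (0 <= vnorm (orbit n)) by apply sqrt_pos.
  set (V := vnorm (orbit n)) in *. set (J := im_wronskian (orbit n)) in *.
  nra.
Qed.

Lemma ln_opnorm_cocycle_ge n :
  INR n * (ln (1 + 2 * eps) / 4) <= ln (opnorm (cocycle alpha (Smat v) (S n) x)).
Proof.
  set (o := opnorm (cocycle alpha (Smat v) (S n) x)).
  assert (Ho1 : 1 <= o) by apply one_le_opnorm_cocycle.
  assert (Hpow : (1 + 2 * eps) ^ n <= o ^ 4).
  { eapply Rle_trans; [apply vnorm_orbit_pow4_ge|]. apply pow_incr. split.
    - unfold vnorm. apply sqrt_pos.
    - apply vnorm_orbit_le_opnorm. }
  apply ln_le in Hpow; [|apply pow_lt; lra]. rewrite !ln_pow in Hpow by lra.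
  replace (INR 4) with 4 in Hpow by (simpl; ring). lra.
Qed.

End Orbit.

Lemma ln_1p_ge x : 0 < x -> x / (1 + x) <= ln (1 + x).
Proof.
  intro Hx. pose proof (exp_ineq1_le (ln (/ (1 + x)))) as Hexp.
  rewrite exp_ln, ln_Rinv in Hexp by (try apply Rinv_0_lt_compat; lra).
  replace (x / (1 + x)) with (1 - / (1 + x)) by (field; lra). lra.
Qed.

Lemma is_lim_seq_inv_S : is_lim_seq (fun n => / INR (S n)) 0.
Proof.
  apply (is_lim_seq_incr_1 (fun n => / INR n)).
  replace (Finite 0) with (Rbar_inv p_infty) by reflexivity.
  apply is_lim_seq_inv; [apply is_lim_seq_INR|discriminate].
Qed.

Lemma is_lim_seq_sub_div_S c : is_lim_seq (fun n => c - c / INR (S n)) c.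
Proof.
  replace (Finite c) with (Finite (c - c * 0)) by (f_equal; ring).
  apply is_lim_seq_minus'; [apply is_lim_seq_const|].
  exact (is_lim_seq_scal_l _ c _ is_lim_seq_inv_S).
Qed.

Lemma RInt_ge_const (g : R -> R) a b c :
  a <= b -> (forall y, a <= y <= b -> continuous g y) ->
  (forall y, a <= y <= b -> c <= g y) -> c * (b - a) <= RInt g a b.
Proof.
  intros Hab Hcont Hc.
  replace (c * (b - a)) with (RInt (fun _ => c) a b)
    by (rewrite RInt_const; unfold scal; simpl; unfold mult; simpl; ring).
  apply RInt_le; [exact Hab|apply ex_RInt_const| |intros y Hy; apply Hc; lra].
  apply (ex_RInt_continuous (V := R_CompleteNormedModule)).
  intros y Hy. rewrite Rmin_left, Rmax_right in Hy by exact Hab. exact (Hcont y Hy).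
Qed.

Lemma continuous_ln_opnorm_cocycle alpha v eps n x :
  0 < eps -> (forall y, continuous v y) -> (forall y, eps <= Im (v y)) ->
  continuous (fun y => ln (opnorm (cocycle alpha (Smat v) n y))) x.
Proof.
  intros Heps Hv Him.
  apply (continuous_comp (fun y => opnorm (cocycle alpha (Smat v) n y)) ln).
  - apply continuous_opnorm, M2_continuous_cocycle.
    intro k. apply M2_continuous_Smat_shift, Hv.
  - apply continuous_ln. pose proof (one_le_opnorm_cocycle alpha eps x v Heps Him n). lra.
Qed.

Lemma lyapunov_Smat_ge alpha v eps :
  0 < eps -> (forall y, continuous v y) -> (forall y, eps <= Im (v y)) ->
  Rbar_le (ln (1 + 2 * eps) / 4) (lyapunov alpha (Smat v)).
Proof.
  intros Heps Hv Him. set (q := ln (1 + 2 * eps) / 4).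
  rewrite <- (is_lim_seq_unique _ _ (is_lim_seq_sub_div_S q)).
  apply Lim_seq_le_loc. exists 0%nat. intros n _.
  assert (Hint : INR n * q * (1 - 0)
                 <= RInt (fun y => ln (opnorm (cocycle alpha (Smat v) (S n) y))) 0 1).
  { apply RInt_ge_const; [lra| |].
    - intros y _. exact (continuous_ln_opnorm_cocycle alpha v eps (S n) y Heps Hv Him).
    - intros y _. apply (ln_opnorm_cocycle_ge alpha eps y v Heps Him). }
  assert (HSn : 0 < INR (S n)) by (apply lt_0_INR; lia).
  replace (q - q / INR (S n)) with (/ INR (S n) * (INR n * q * (1 - 0)))
    by (rewrite S_INR in *; field; lra).
  apply Rmult_le_compat_l; [left; apply Rinv_0_lt_compat|]; assumption.
Qed.

Theorem lemma5p6 :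
  forall l : R, 0 < l ->
  exists Cl : R, 0 < Cl /\
  forall (alpha : R) (v : R -> C) (eps : R),
    irrational alpha ->
    (forall x, continuous v x) ->
    (forall x, v (x + 1) = v x) ->
    0 < eps -> eps <= l ->
    (forall x, Rabs (Re (v x)) <= l /\ eps <= Im (v x) <= l) ->
    Rbar_le (Finite (Cl * eps)) (lyapunov alpha (Smat v)).
Proof.
  intros l Hl. exists (/ (2 * (1 + 2 * l))). split; [apply Rinv_0_lt_compat; lra|].
  intros alpha v eps _ Hv _ Heps Hepsl Hbounds.
  assert (Him : forall y, eps <= Im (v y)) by (intro y; apply Hbounds).
  eapply Rbar_le_trans; [|exact (lyapunov_Smat_ge alpha v eps Heps Hv Him)].
  simpl. pose proof (ln_1p_ge (2 * eps) ltac:(lra)) as Hln.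
  apply Rle_trans with (2 * eps / (1 + 2 * eps) / 4); [|lra].
  replace (2 * eps / (1 + 2 * eps) / 4) with (eps * / (2 * (1 + 2 * eps))) by (field; lra).
  rewrite Rmult_comm. apply Rmult_le_compat_l; [lra|]. apply Rinv_le_contravar; lra.
Qed.
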